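(* Let $n\ge 1$ and $w\ge 1$ be integers, and let $N_w(n)$ denote the number of partial orders of width at most $w$ on a fixed set of $n$ (labeled) elements. There is a deterministic algorithm which, given a set $P$ of $n$ elements, the integer $w$, and access to a query oracle for an unknown poset $\mathcal{P}=(P,\succ)$ of width at most $w$, sorts $\mathcal{P}$ using at most $2\log N_w(n)+4wn$ oracle queries. In particular, the number of queries is at most $2n\log n+8wn+2w\log w$.
   Context: A poset $(P,\succ)$ consists of a set $P$ and an irreflexive, transitive relation $\succ\subseteq P\times P$. Elements $a,b$ are incomparable if neither $a\succ b$ nor $b\succ a$. An anti-chain is a set of mutually incomparable elements; the width of the poset is the maximum size of an anti-chain. A query oracle for $(P,\succ)$ answers a query on a pair $(x,y)$ of elements by reporting whether $x\succ y$, $y\succ x$, or $x$ and $y$ are incomparable. Sorting the poset means determining, for every pair of elements of $P$, their relation in $(P,\succ)$. The query complexity is the number of oracle queries made. All logarithms are base $2$. *)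

From mathcomp Require Import all_boot.
From Stdlib Require Import Reals.
Set Implicit Arguments. Unset Strict Implicit. Unset Printing Implicit Defensive.

(* The ground set P is 'I_n.  A binary relation on it is a finite function
   r : {ffun 'I_n * 'I_n -> bool}; r (x, y) means x > y (x ≻ y). *)
Definition relT (n : nat) := {ffun 'I_n * 'I_n -> bool}.

Definition irreflb n (r : relT n) : bool := [forall x, ~~ r (x, x)].
Definition transb n (r : relT n) : bool :=
  [forall x, forall y, forall z, r (x, y) && r (y, z) ==> r (x, z)].
Definition posetb n (r : relT n) : bool := irreflb r && transb r.

Definition incompb n (r : relT n) (x y : 'I_n) : bool := ~~ r (x, y) && ~~ r (y, x).
Definition antichainb n (r : relT n) (A : {set 'I_n}) : bool :=
  [forall x in A, forall y in A, (x != y) ==> incompb r x y].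
Definition width_le n (r : relT n) (w : nat) : bool :=
  [forall A : {set 'I_n}, antichainb r A ==> (#|A| <= w)].

Definition posets_w (n w : nat) : {set relT n} :=
  [set r | posetb r && width_le r w].
Definition N_w (w n : nat) : nat := #|posets_w n w|.

Inductive answer := Ans_gt | Ans_lt | Ans_inc.
Definition oracle n (r : relT n) (x y : 'I_n) : answer :=
  if r (x, y) then Ans_gt else if r (y, x) then Ans_lt else Ans_inc.

(* Deterministic adaptive query algorithms = decision trees: an internal node
   queries the pair (x, y) and continues according to the answer; a leaf
   outputs the (claimed) relation x ≻ y for every pair. *)
Inductive dtree (n : nat) : Type :=
| Leaf : ('I_n -> 'I_n -> bool) -> dtree n
| Query : 'I_n -> 'I_n -> (answer -> dtree n) -> dtree n.

Fixpoint run n (r : relT n) (t : dtree n) : ('I_n -> 'I_n -> bool) * nat :=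
  match t with
  | Leaf o => (o, 0)
  | Query x y k => let p := run r (k (oracle r x y)) in (p.1, p.2.+1)
  end.

Definition log2 (x : R) : R := (ln x / ln 2)%R.

(* Insertion sort. Before the k-th element x is inserted, all posets still
   consistent with the answers agree on the first k elements; fix a Dilworth
   decomposition of these into at most w chains. In each chain the elements
   below x form an initial segment and those above x a final one, so x is
   located by two numbers per chain. Each number is found by a binary search
   weighted by how many consistent posets realize each value (a Gilbert-Moore
   code): shrinking the set S of candidates to S_v costs
   log2 (|S| / |S_v|) + 2 queries. These logarithms telescope over the 2wn
   searches, so at most log2 N_w(n) + 4wn queries are made. The second bound
   comes from N_w(n) <= n^n 2^(4wn): a poset of width w is determined by a
   chain cover, the ranks inside the chains and 2wn bits. *)

From mathcomp Require Import all_boot.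
From Stdlib Require Import Reals Lra.
From mathcomp Require Import ssrnat zify.
Set Implicit Arguments. Unset Strict Implicit. Unset Printing Implicit Defensive.

Lemma ln2_gt0 : (0 < ln 2)%R.
Proof. have := ln_lt_2; lra. Qed.

Lemma log2_0 : log2 (INR 0) = 0%R.
Proof.
have ln0 : ln 0 = 0%R.
  by rewrite /ln; case: Rlt_dec => // lt00; case: (Rlt_irrefl _ lt00).
by rewrite /log2 /= ln0 /Rdiv Rmult_0_l.
Qed.

Lemma log2_leq (a b : nat) : 0 < a -> a <= b -> (log2 (INR a) <= log2 (INR b))%R.
Proof.
move=> a_gt0 /leP/le_INR [lt_ab|->]; last exact: Rle_refl.
apply: Rmult_le_compat_r; first exact/Rlt_le/Rinv_0_lt_compat/ln2_gt0.
by apply/Rlt_le/ln_increasing => //; apply/lt_0_INR/ltP.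
Qed.

Lemma log2_ge0 (a : nat) : (0 <= log2 (INR a))%R.
Proof.
case: a => [|a]; first by rewrite log2_0; apply: Rle_refl.
have := @log2_leq 1 a.+1 isT isT.
by rewrite /log2 /= ln_1 /Rdiv Rmult_0_l.
Qed.

Lemma xlog2x_ge0 (a : nat) : (0 <= INR a * log2 (INR a))%R.
Proof. by apply: Rmult_le_pos; [apply: pos_INR | apply: log2_ge0]. Qed.

Lemma log2M (a b : nat) : 0 < a -> 0 < b ->
  log2 (INR (a * b)) = (log2 (INR a) + log2 (INR b))%R.
Proof.
move=> /ltP/lt_0_INR a_gt0 /ltP/lt_0_INR b_gt0.
by rewrite /log2 mult_INR ln_mult // /Rdiv Rmult_plus_distr_r.
Qed.

Lemma log2X (a e : nat) : 0 < a -> log2 (INR (a ^ e)) = (INR e * log2 (INR a))%R.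
Proof.
move=> /ltP/lt_0_INR a_gt0.
have -> : INR (a ^ e) = (INR a ^ e)%R.
  by elim: e => [|e IH] //; rewrite expnS mult_INR IH.
by rewrite /log2 ln_pow // /Rdiv Rmult_assoc.
Qed.

Lemma log2_exp2 (e : nat) : log2 (INR (2 ^ e)) = INR e.
Proof.
rewrite log2X // (_ : log2 (INR 2) = 1%R) ?Rmult_1_r //.
have -> : INR 2 = 2%R by rewrite /=; lra.
by rewrite /log2 /Rdiv Rinv_r //; have := ln2_gt0; lra.
Qed.

(** * Weighted binary search *)

Definition sorts n (r : relT n) (T : dtree n) := forall x y, (run r T).1 x y = r (x, y).

Definition sortable n (S : {set relT n}) (B : R) := exists T : dtree n,
  forall r, r \in S -> sorts r T /\ (INR (run r T).2 <= log2 (INR #|S|) + B)%R.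

Lemma sortable_le n (S : {set relT n}) B1 B2 :
  (B1 <= B2)%R -> sortable S B1 -> sortable S B2.
Proof.
move=> le_B [T hT]; exists T => r /hT[sorts_r cost].
by split=> //; lra.
Qed.

Lemma sortable_set0 n B : sortable (set0 : {set relT n}) B.
Proof. by exists (Leaf (fun _ _ => false)) => r; rewrite inE. Qed.

Lemma sorts_Query n (r : relT n) x y k :
  sorts r (Query x y k) = sorts r (k (oracle r x y)).
Proof. by []. Qed.

Lemma cost_Query n (r : relT n) x y k :
  (run r (Query x y k)).2 = (run r (k (oracle r x y))).2.+1.
Proof. by []. Qed.

Lemma monotone_threshold (f : nat -> nat) b :
  {homo f : x y / x <= y} -> (exists v, b <= f v) ->
  exists t, forall v, (t <= v) = (b <= f v).
Proof.
move=> f_mono ex_v; case: (ex_minnP ex_v) => t b_le_ft t_min; exists t => v.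
apply/idP/idP => [/f_mono|/t_min //]; exact: leq_trans.
Qed.

Section ThresholdSearch.
Variables (n : nat) (S : {set relT n}) (j : relT n -> nat) (M : nat) (B : R).
Variables (qx qy : nat -> 'I_n) (g : nat -> answer -> bool).
Hypothesis j_le : forall r, r \in S -> j r <= M.
Hypothesis g_threshold : forall t r, 0 < t <= M -> r \in S ->
  g t (oracle r (qx t) (qy t)) = (t <= j r).
Hypothesis fiber_sortable : forall v, sortable [set r in S | j r == v] B.

Let W := #|S|.
Let mass v := #|[set r in S | j r == v]|.
Let below v := #|[set r in S | j r < v]|.
Let mid v := below v + below v.+1.
(* Gilbert-Moore code: [bucket d v] consists of the first [d] binary digits of
   the midpoint [mid v / 2W] of the interval of [v] in the distribution of [j]. *)
Let bucket d v := mid v * 2 ^ d %/ W.*2.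
Let isolated v d := W.*2 <= mass v * 2 ^ d.

Lemma belowS v : below v.+1 = below v + mass v.
Proof.
rewrite /below /mass -(cardsID [set r in S | j r < v] [set r in S | j r < v.+1]).
by congr addn; apply: eq_card => r; rewrite !inE; case: (r \in S) => //=; lia.
Qed.

Lemma below_mono : {homo below : v1 v2 / v1 <= v2}.
Proof.
move=> v1 v2 le_v; apply/subset_leq_card/subsetP => r; rewrite !inE.
by case/andP=> -> /=; lia.
Qed.

Lemma below_mass v : below v + mass v <= W.
Proof.
by rewrite -belowS; apply/subset_leq_card/subsetP => r; rewrite inE => /andP[].
Qed.

Lemma mass_gt0 r : r \in S -> 0 < mass (j r).
Proof. by move=> rS; apply/card_gt0P; exists r; rewrite inE rS eqxx. Qed.

Lemma mid_gap v1 v2 : v1 < v2 ->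
  mid v1 + mass v1 <= mid v2 /\ mid v1 + mass v2 <= mid v2.
Proof.
move=> lt_v; rewrite /mid.
have := belowS v1; have := belowS v2.
have := below_mono (ltnW lt_v); have := below_mono lt_v; lia.
Qed.

Lemma bucket_lt d v1 v2 v : 0 < W -> mid v1 + mass v <= mid v2 -> isolated v d ->
  bucket d v1 < bucket d v2.
Proof.
move=> W_gt0 gap iso; rewrite /bucket.
have W2_gt0 : 0 < W.*2 by rewrite double_gt0.
rewrite -addn1 -(divnDMl 1 _ W2_gt0) mul1n; apply: leq_div2r.
apply: leq_trans (leq_add (leqnn _) iso) _.
by rewrite -mulnDl leq_mul2r gap orbT.
Qed.

Lemma bucket_inj d v1 v2 : 0 < W -> isolated v1 d -> bucket d v1 = bucket d v2 -> v1 = v2.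
Proof.
move=> W_gt0 iso eq_b; case: (ltngtP v1 v2) => // lt_v.
- by have := bucket_lt W_gt0 (mid_gap lt_v).1 iso; rewrite eq_b ltnn.
- by have := bucket_lt W_gt0 (mid_gap lt_v).2 iso; rewrite eq_b ltnn.
Qed.

Lemma bucket_mono d : {homo bucket d : v1 v2 / v1 <= v2}.
Proof.
move=> v1 v2 le_v; apply/leq_div2r; rewrite leq_mul2r /mid.
by rewrite leq_add ?below_mono ?orbT.
Qed.

Lemma bucket_halve d v : bucket d.+1 v %/ 2 = bucket d v.
Proof. by rewrite /bucket expnS mulnCA -divnMA [W.*2 * 2]mulnC divnMl. Qed.

Lemma bucket0 r : r \in S -> bucket 0 (j r) = 0.
Proof.
move=> rS; rewrite /bucket expn0 muln1 divn_small // /mid belowS.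
have := below_mass (j r); have := mass_gt0 rS; lia.
Qed.

Lemma isolated_mono v d1 d2 : d1 <= d2 -> isolated v d1 -> isolated v d2.
Proof.
by move=> le_d iso; apply: leq_trans iso _; rewrite leq_mul2l leq_pexp2l ?orbT.
Qed.

Lemma isolating_depth r : r \in S ->
  exists d, isolated (j r) d /\ mass (j r) * 2 ^ d <= 4 * W.
Proof.
move=> rS; have mass_pos := mass_gt0 rS.
have ex_d : exists d, isolated (j r) d.
  exists W.*2; apply: leq_trans (ltnW (ltn_expl _ (isT : 1 < 2))) _.
  by rewrite leq_pmull.
case: (ex_minnP ex_d) => d iso d_min; exists d; split=> //.
case: d iso d_min => [|d] _ d_min.
  by rewrite expn0 muln1; have := below_mass (j r); lia.
have : ~~ isolated (j r) d by apply/negP => /d_min; rewrite ltnn.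
by rewrite /isolated expnS; lia.
Qed.

(* [T] finishes the search for every [r] whose value has the [d]-digit
   prefix [a], spending one query per digit until [j r] is isolated. *)
Let search_from d a T := forall r, r \in S -> bucket d (j r) = a ->
  sorts r T /\ forall d0, isolated (j r) d0 ->
    (INR (run r T).2 <= log2 (INR (mass (j r))) + B + INR (d0 - d))%R.

Lemma pure_node d a v :
  (forall r, r \in S -> bucket d (j r) = a -> j r = v) -> exists T, search_from d a T.
Proof.
move=> pure; have [T hT] := fiber_sortable v; exists T => r rS node_r.
have jr := pure r rS node_r.
have rS_v : r \in [set r in S | j r == v] by rewrite inE rS jr eqxx.
have [sorts_r cost] := hT r rS_v.
split=> // d0 _; rewrite jr; have := pos_INR (d0 - d); rewrite /mass; lra.
Qed.

Let unresolved d a := forall r d0,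
  r \in S -> bucket d (j r) = a -> isolated (j r) d0 -> d < d0.

Lemma bucket_child d a r : bucket d (j r) = a ->
  bucket d.+1 (j r) = a.*2 \/ bucket d.+1 (j r) = a.*2.+1.
Proof. by move=> node_r; have := bucket_halve d (j r); rewrite node_r; lia. Qed.

Lemma descend d a b T r : unresolved d a -> search_from d.+1 b T ->
  r \in S -> bucket d (j r) = a -> bucket d.+1 (j r) = b ->
  sorts r T /\ forall d0, isolated (j r) d0 ->
    (INR (run r T).2 + 1 <= log2 (INR (mass (j r))) + B + INR (d0 - d))%R.
Proof.
move=> deep T_ok rS node_r child_r; have [sorts_r cost] := T_ok r rS child_r.
split=> // d0 iso; have := cost d0 iso; have := deep r d0 rS node_r iso => lt_d.
by rewrite (_ : d0 - d = (d0 - d.+1).+1) ?S_INR; [lra | lia].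
Qed.

Lemma forced_child d a b T : unresolved d a -> search_from d.+1 b T ->
  (forall r, r \in S -> bucket d (j r) = a -> bucket d.+1 (j r) = b) -> search_from d a T.
Proof.
move=> deep T_ok forced r rS node_r.
have [sorts_r cost] := descend deep T_ok rS node_r (forced r rS node_r).
by split=> // d0 iso; have := cost d0 iso; lra.
Qed.

Lemma query_node d a T0 T1 r0 r1 : unresolved d a ->
  search_from d.+1 a.*2 T0 -> search_from d.+1 a.*2.+1 T1 -> r0 \in S -> r1 \in S ->
  bucket d.+1 (j r0) = a.*2 -> bucket d.+1 (j r1) = a.*2.+1 ->
  exists T, search_from d a T.
Proof.
move=> deep T0_ok T1_ok r0S r1S left0 right1.
have [t t_spec] : exists t, forall v, (t <= v) = (a.*2.+1 <= bucket d.+1 v).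
  by apply: monotone_threshold; [exact: bucket_mono | exists (j r1); rewrite right1].
have t_range : 0 < t <= M.
  have := t_spec (j r0); have := t_spec (j r1); rewrite left0 right1 leqnn ltnn.
  by have := j_le r1S; lia.
exists (Query (qx t) (qy t) (fun ans => if g t ans then T1 else T0)) => r rS node_r.
rewrite sorts_Query cost_Query g_threshold // t_spec.
case: (bucket_child node_r) => child_r; rewrite child_r ?ltnn ?leqnn.
- have [sorts_r cost] := descend deep T0_ok rS node_r child_r.
  by split=> // d0 iso; rewrite S_INR; apply: cost.
- have [sorts_r cost] := descend deep T1_ok rS node_r child_r.
  by split=> // d0 iso; rewrite S_INR; apply: cost.
Qed.

Lemma split_node d a T0 T1 : unresolved d a ->
  search_from d.+1 a.*2 T0 -> search_from d.+1 a.*2.+1 T1 -> exists T, search_from d a T.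
Proof.
move=> deep T0_ok T1_ok.
case: (boolP [exists r in S, (bucket d (j r) == a) && (bucket d.+1 (j r) == a.*2)])
  => [/exists_inP[r0 r0S /andP[_ /eqP left0]] | no_left]; last first.
  exists T1; apply: forced_child deep T1_ok _ => r rS node_r.
  case: (bucket_child node_r) => // left_r; case/negP: no_left.
  by apply/exists_inP; exists r; rewrite ?node_r ?left_r ?eqxx.
case: (boolP [exists r in S, (bucket d (j r) == a) && (bucket d.+1 (j r) == a.*2.+1)])
  => [/exists_inP[r1 r1S /andP[_ /eqP right1]] | no_right]; last first.
  exists T0; apply: forced_child deep T0_ok _ => r rS node_r.
  case: (bucket_child node_r) => // right_r; case/negP: no_right.
  by apply/exists_inP; exists r; rewrite ?node_r ?right_r ?eqxx.
exact: query_node deep T0_ok T1_ok r0S r1S left0 right1.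
Qed.

Lemma node_tree e : forall d a, d + e = W.*2 -> exists T, search_from d a T.
Proof.
elim: e => [|e IH] d a de;
  case: (boolP [exists r0 in S, (bucket d (j r0) == a) && isolated (j r0) d])
  => [/exists_inP[r0 r0S /andP[/eqP node0 iso0]] | none].
- apply: (pure_node (v := j r0)) => r rS node_r; symmetry.
  by apply: (bucket_inj _ iso0); [apply/card_gt0P; exists r | rewrite node0 node_r].
- apply: (pure_node (v := 0)) => r rS node_r; case/negP: none.
  apply/exists_inP; exists r; rewrite // node_r eqxx /isolated -(addn0 d) de /=.
  apply: leq_trans (ltnW (ltn_expl _ (isT : 1 < 2))) _.
  by rewrite leq_pmull // mass_gt0.
- apply: (pure_node (v := j r0)) => r rS node_r; symmetry.
  by apply: (bucket_inj _ iso0); [apply/card_gt0P; exists r | rewrite node0 node_r].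
- have de' : d.+1 + e = W.*2 by rewrite addSnnS.
  have [T0 T0_ok] := IH d.+1 a.*2 de'; have [T1 T1_ok] := IH d.+1 a.*2.+1 de'.
  apply: split_node T0_ok T1_ok => r d0 rS node_r iso; rewrite ltnNge.
  apply/negP => le_d0; case/negP: none; apply/exists_inP; exists r => //.
  by rewrite node_r eqxx; apply: isolated_mono iso.
Qed.

Lemma threshold_search : sortable S (B + 2).
Proof.
have [T T_ok] := @node_tree W.*2 0 0 (add0n _); exists T => r rS.
have [sorts_r cost] := T_ok r rS (bucket0 rS); split=> //.
have [d0 [iso tight]] := isolating_depth rS.
have W_gt0 : 0 < W by apply/card_gt0P; exists r.
have mass_pos := mass_gt0 rS.
have split_log : log2 (INR (mass (j r) * 2 ^ d0)) = (log2 (INR (mass (j r))) + INR d0)%R.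
  by rewrite log2M ?log2_exp2 ?expn_gt0.
have log_4W : log2 (INR (4 * W)) = (2 + log2 (INR W))%R.
  by rewrite log2M // (_ : 4 = 2 ^ 2) // log2_exp2 /=; lra.
have := log2_leq _ tight; rewrite muln_gt0 mass_pos expn_gt0 => /(_ isT).
have := cost d0 iso; rewrite subn0 -/W; lra.
Qed.

End ThresholdSearch.

(** * Chains and Dilworth's theorem *)

Lemma injective_bounded_onto (T : finType) (B : {set T}) (h : T -> nat) m i :
  {in B &, injective h} -> {in B, forall b, h b < m} -> i < m -> m <= #|B| ->
  exists2 b, b \in B & h b = i.
Proof.
move=> h_inj h_lt i_lt m_le.
case: (boolP [exists b in B, h b == i]) => [/exists_inP[b bB /eqP] | none].
  by exists b.
have uniq_hi : uniq (i :: map h (enum B)).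
  rewrite /= map_inj_in_uniq ?enum_uniq ?andbT; last first.
    by move=> x y; rewrite !mem_enum; apply: h_inj.
  apply/mapP => -[b]; rewrite mem_enum => bB hb; case/negP: none.
  by apply/exists_inP; exists b; rewrite // -hb.
have sub_iota : {subset i :: map h (enum B) <= iota 0 m}.
  move=> t; rewrite inE mem_iota add0n => /orP[/eqP-> // | /mapP[b]].
  by rewrite mem_enum => /h_lt lt_b ->.
by have := uniq_leq_size uniq_hi sub_iota; rewrite /= size_map size_iota -cardE; lia.
Qed.

Section StrictOrder.
Variables (T : finType) (R : rel T).
Hypotheses (R_irr : irreflexive R) (R_trans : transitive R).
Implicit Types (A B C K : {set T}).

Definition chain (C : {set T}) := {in C &, forall a b, a = b \/ R a b \/ R b a}.

Definition antichain (B : {set T}) :=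
  [forall x in B, forall y in B, (x != y) ==> ~~ R x y].

Definition antichain_bound (A : {set T}) w :=
  forall B : {set T}, B \subset A -> antichain B -> #|B| <= w.

Definition chain_cover (A : {set T}) w (f : T -> nat) :=
  {in A, forall a, f a < w} /\ {in A &, forall a b, f a = f b -> a = b \/ R a b \/ R b a}.

Definition rank (C : {set T}) z := #|[set z' in C | R z z']|.

Lemma antichainP (B : {set T}) :
  reflect {in B &, forall x y, x != y -> ~~ R x y} (antichain B).
Proof.
apply: (iffP forall_inP) => [ac x y xB yB | ac x xB].
  by move/forall_inP: (ac x xB) => /(_ y yB) /implyP.
by apply/forall_inP => y yB; apply/implyP; apply: ac.
Qed.

Lemma exists_maximal (A : {set T}) x0 : x0 \in A ->
  exists2 m, m \in A & {in A, forall b, ~~ R b m}.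
Proof.
move=> x0A; case: (arg_minnP (fun x => #|[set y | R y x]|) x0A) => m mA m_min.
exists m => // b bA; apply/negP => Rbm.
have := m_min b bA; rewrite leqNgt => /negP; apply.
apply/proper_card/properP; split.
  by apply/subsetP => y; rewrite !inE => /R_trans; apply.
by exists b; rewrite !inE ?R_irr.
Qed.

Lemma chain_cover_le A w1 w2 f : w1 <= w2 -> chain_cover A w1 f -> chain_cover A w2 f.
Proof. by move=> le_w [f_lt f_ch]; split=> // a /f_lt /leq_trans; apply. Qed.

Lemma chain_cover_add A K m g : chain K ->
  chain_cover (A :\: K) m g -> chain_cover A m.+1 (fun y => if y \in K then m else g y).
Proof.
move=> K_ch [g_lt g_ch]; have outK y : y \in A -> y \notin K -> y \in A :\: K.
  by move=> yA yK; rewrite inE yK.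
split=> [y yA | u v uA vA] /=.
  by case: ifP => [_ | /negbT yK]; [|apply: ltnW; apply: g_lt; apply: outK].
case: ifP => [uK | /negbT uK]; case: ifP => [vK | /negbT vK].
- by move=> _; apply: K_ch.
- by move=> e; have := g_lt v (outK v vA vK); rewrite -e ltnn.
- by move=> e; have := g_lt u (outK u uA uK); rewrite e ltnn.
- by apply: g_ch; apply: outK.
Qed.

Lemma rank_lt (C : {set T}) a b : a \in C -> R a b -> b \in C -> rank C b < rank C a.
Proof.
move=> aC Rab bC; apply/proper_card/properP; split.
  by apply/subsetP => y; rewrite !inE => /andP[-> /(R_trans Rab)].
by exists b; rewrite !inE ?bC ?Rab // R_irr andbF.
Qed.

Lemma rank_lt_card (C : {set T}) z : z \in C -> rank C z < #|C|.
Proof.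
move=> zC; apply/proper_card/properP; split.
  by apply/subsetP => y; rewrite !inE => /andP[].
by exists z; rewrite // !inE R_irr andbF.
Qed.

Lemma rank_inj (C : {set T}) : chain C -> {in C &, injective (rank C)}.
Proof.
move=> C_ch a b aC bC e; case: (C_ch a b aC bC) => [// | [Rab | Rba]].
  by have := rank_lt aC Rab bC; rewrite e ltnn.
by have := rank_lt bC Rba aC; rewrite e ltnn.
Qed.

Lemma rank_onto (C : {set T}) t : chain C -> t < #|C| ->
  exists2 z, z \in C & rank C z = t.
Proof.
move=> C_ch t_lt.
exact: injective_bounded_onto (rank_inj C_ch) (@rank_lt_card C) t_lt (leqnn _).
Qed.

(* The elements of a chain below [y] form an initial segment of the chain. *)
Lemma chain_belowE C y z : chain C -> z \in C ->
  R y z = (rank C z < #|[set z' in C | R y z']|).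
Proof.
move=> C_ch zC; apply/idP/idP => [Ryz | lt_rank].
  apply/proper_card/properP; split.
    by apply/subsetP => u; rewrite !inE => /andP[-> /(R_trans Ryz)].
  by exists z; rewrite !inE ?zC ?Ryz // R_irr andbF.
apply/negPn/negP => nRyz; move: lt_rank; rewrite ltnNge => /negP; apply.
apply/subset_leq_card/subsetP => u; rewrite !inE => /andP[uC Ryu].
rewrite uC; case: (C_ch z u zC uC) => [ezu | [// | Ruz]].
  by move: Ryu; rewrite -ezu (negbTE nRyz).
by have := R_trans Ryu Ruz; rewrite (negbTE nRyz).
Qed.

(* Galvin's induction step: [a] is maximal in [A] and [f] covers [A :\ a] by
   [k] chains, [k] being the width of [A :\ a]. Every maximum antichain of
   [A :\ a] meets every chain; the largest elements [top i] of the sets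
   [met i] of such meeting points form an antichain [tops]. If [a] is above
   some [top i], removing [a] and the part of chain [i] below [top i] lowers
   the width; otherwise [a] extends [tops] to a larger antichain. *)
Section DilworthStep.
Variables (A : {set T}) (a : T) (k w : nat) (f : T -> nat).
Let A' := A :\ a.
Hypotheses (a_in : a \in A) (a_max : {in A, forall b, ~~ R b a}).
Hypotheses (A_width : antichain_bound A w) (A'_width : antichain_bound A' k).
Hypothesis f_cover : chain_cover A' k f.
Let max_antichain B := [&& B \subset A', antichain B & #|B| == k].
Hypothesis k_attained : exists B, max_antichain B.
Hypothesis IH : forall A2 w2, #|A2| < #|A| -> antichain_bound A2 w2 ->
  exists g, chain_cover A2 w2 g.

Lemma max_antichain_meets B i : max_antichain B -> i < k -> exists2 z, z \in B & f z = i.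
Proof.
case/and3P=> /subsetP BA' /antichainP B_ac /eqP B_card i_lt.
apply: (injective_bounded_onto (m := k)) => //; last by rewrite B_card.
- move=> b1 b2 b1B b2B e; case: (f_cover.2 b1 b2 (BA' _ b1B) (BA' _ b2B) e) => // R12.
  apply/eqP/negPn/negP => ne12; case: R12 => R12.
    by have := B_ac b1 b2 b1B b2B ne12; rewrite R12.
  by have := B_ac b2 b1 b2B b1B; rewrite eq_sym R12 => /(_ ne12).
- by move=> b /BA'; apply: f_cover.1.
Qed.

Let met i := [set z in A' | (f z == i) && [exists B, max_antichain B && (z \in B)]].
Let top i := odflt a [pick z in met i | [forall z' in met i, ~~ R z' z]].
Let tops := [set top i | i : 'I_k].

Lemma met_spec i z : z \in met i ->
  [/\ z \in A', f z = i & exists2 B, max_antichain B & z \in B].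
Proof.
by rewrite inE => /andP[zA' /andP[/eqP fz /existsP[B /andP[]]]]; split=> //; exists B.
Qed.

Lemma met_intro B z : max_antichain B -> z \in B -> z \in met (f z).
Proof.
move=> B_max zB; case/and3P: (B_max) => /subsetP BA' _ _.
by rewrite inE BA' //= eqxx; apply/existsP; exists B; rewrite B_max.
Qed.

Lemma top_spec i : i < k ->
  top i \in met i /\ {in met i, forall z, z = top i \/ R (top i) z}.
Proof.
move=> i_lt; have top_Y : top i \in met i /\ {in met i, forall z, ~~ R z (top i)}.
  rewrite /top; case: pickP => [z /andP[zY /forall_inP z_max] | none] /=; first by split.
  have [B B_max] := k_attained; have [z0 z0B fz0] := max_antichain_meets B_max i_lt.
  have z0Y : z0 \in met i by rewrite -fz0; apply: met_intro B_max z0B.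
  have [m mY m_max] := exists_maximal z0Y.
  by have := none m; rewrite mY; move/negP; case; apply/forall_inP.
case: top_Y => tY t_max; split=> // z zY.
have [zA' fz _] := met_spec zY; have [tA' ft _] := met_spec tY.
case: (f_cover.2 z (top i) zA' tA' (etrans fz (esym ft))) => [-> | [Rzt | Rtz]].
- by left.
- by have := t_max z zY; rewrite Rzt.
- by right.
Qed.

Lemma tops_spec u : u \in tops -> exists2 i, i < k & u = top i /\ u \in met i.
Proof.
by case/imsetP=> i _ ->; exists i => //; split=> //; case: (top_spec (ltn_ord i)).
Qed.

Lemma tops_sub : tops \subset A'.
Proof. by apply/subsetP => u /tops_spec[i _ [_ /met_spec[]]]. Qed.

Lemma card_tops : #|tops| = k.
Proof.
rewrite card_imset ?card_ord // => i1 i2 e; apply: val_inj.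
have [/met_spec[_ f1 _] _] := top_spec (ltn_ord i1).
have [/met_spec[_ f2 _] _] := top_spec (ltn_ord i2).
by rewrite /= -f1 -f2 e.
Qed.

(* If [top i] were above [top j], it would be above the element of the
   [j]-th chain in any maximum antichain containing [top i]. *)
Lemma tops_antichain : antichain tops.
Proof.
apply/antichainP => u v /tops_spec[i i_lt [eu uY]] /tops_spec[j j_lt [ev vY]] ne_uv.
apply/negP => Ruv; have [_ fu [B B_max uB]] := met_spec uY.
have [z zB fz] := max_antichain_meets B_max j_lt.
have zY : z \in met j by rewrite -fz; apply: met_intro B_max zB.
have Ruz : R u z.
  case: ((top_spec j_lt).2 z zY) => [-> | Rvz]; first by rewrite -ev.
  by apply: R_trans Ruv _; rewrite ev.
have ne_uz : u != z.
  by apply: contraNneq ne_uv => euz; rewrite eu ev -fu euz fz.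
case/and3P: B_max => _ /antichainP B_ac _.
by have := B_ac u z uB zB ne_uz; rewrite Ruz.
Qed.

Lemma k_le_w : k <= w.
Proof.
rewrite -card_tops; apply: A_width tops_antichain.
by apply: subset_trans tops_sub (subsetDl _ _).
Qed.

Section AboveTop.
Variables (i : nat) (z : T).
Hypotheses (i_lt : i < k) (ez : z = top i) (Raz : R a z).
Let K := a |: [set y in A' | (f y == i) && ((y == z) || R z y)].

Lemma K_chain : chain K.
Proof.
have aR y : (y == z) || R z y -> R a y.
  by case/orP=> [/eqP-> // | Rzy]; apply: R_trans Raz Rzy.
move=> u v; rewrite !inE.
move=> /orP[/eqP-> | /andP[uA' /andP[/eqP fu zu]]]
       /orP[/eqP-> | /andP[vA' /andP[/eqP fv zv]]].
- by left.
- by right; left; apply: aR.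
- by right; right; apply: aR.
- by apply: f_cover.2; rewrite ?inE ?fu ?fv.
Qed.

Lemma K_meets_max_antichain B : max_antichain B -> exists2 y, y \in B & y \in K.
Proof.
move=> B_max; have [y yB fy] := max_antichain_meets B_max i_lt; exists y => //.
have yY : y \in met i by rewrite -fy; apply: met_intro B_max yB.
have [yA' _ _] := met_spec yY.
apply/setU1P; right; rewrite inE yA' fy eqxx /=.
by case: ((top_spec i_lt).2 y yY) => [-> | Rty]; rewrite ez ?eqxx // Rty orbT.
Qed.

Lemma width_outside_K : antichain_bound (A :\: K) k.-1.
Proof.
move=> B /subsetP BAK B_ac.
have BA' : B \subset A'.
  apply/subsetP => u /BAK; rewrite !inE => /andP[uK ->]; rewrite andbT.
  by apply: contraNneq uK => ->; rewrite eqxx.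
have := A'_width BA' B_ac; rewrite leq_eqVlt => /orP[/eqP B_card | ]; last by lia.
have B_max : max_antichain B by rewrite /max_antichain BA' B_ac B_card eqxx.
have [y yB yK] := K_meets_max_antichain B_max.
by have := BAK y yB; rewrite inE yK.
Qed.

Lemma cover_above_top : exists g, chain_cover A w g.
Proof.
have ltA : #|A :\: K| < #|A|.
  by apply/proper_card/properP; split; [apply: subsetDl | exists a; rewrite // !inE eqxx].
have [g g_cover] := IH ltA width_outside_K.
exists (fun y => if y \in K then k.-1 else g y).
apply: chain_cover_le (chain_cover_add K_chain g_cover).
by have := k_le_w; lia.
Qed.

End AboveTop.

Lemma cover_beside_tops : ~~ [exists z in tops, R a z] -> exists g, chain_cover A w g.
Proof.
move=> none; have a_tops : a \notin tops.
  by apply/negP => /(subsetP tops_sub); rewrite !inE eqxx.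
have ac : antichain (a |: tops).
  apply/antichainP => u v; rewrite !inE.
  move=> /orP[/eqP-> | uT] /orP[/eqP-> | vT] ne; first by rewrite eqxx in ne.
  - by apply: contra none => Rav; apply/exists_inP; exists v.
  - by apply: a_max; apply: (subsetP (subsetDl A [set a])); apply: (subsetP tops_sub).
  - by move/antichainP: tops_antichain; apply.
have sub : a |: tops \subset A.
  apply/subsetP => u; rewrite !inE => /orP[/eqP-> // | /(subsetP tops_sub)].
  by rewrite inE => /andP[].
have := A_width sub ac; rewrite cardsU1 a_tops card_tops => k_lt.
exists (fun y => if y \in [set a] then k else f y).
apply: chain_cover_le k_lt (chain_cover_add _ f_cover).
by move=> u v; rewrite !inE => /eqP-> /eqP->; left.
Qed.

Lemma dilworth_step : exists g, chain_cover A w g.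
Proof.
case: (boolP [exists z in tops, R a z]); last exact: cover_beside_tops.
by case/exists_inP=> z /tops_spec[i i_lt [ez _]] Raz; apply: (cover_above_top i_lt ez Raz).
Qed.

End DilworthStep.

Theorem dilworth A w : antichain_bound A w -> exists f, chain_cover A w f.
Proof.
elim: {A}_.+1 {-2}A (ltnSn #|A|) w => // m IH A A_lt w A_width.
case: (set_0Vmem A) => [-> | [x0 x0A]].
  by exists (fun _ => 0); split=> [a | a b]; rewrite inE.
have [a aA a_max] := exists_maximal x0A.
pose small := [pred B : {set T} | (B \subset A :\ a) && antichain B].
pose k := \max_(B in small) #|B|.
have A'_width : antichain_bound (A :\ a) k.
  by move=> B BA' B_ac; apply: (@leq_bigmax_cond _ (mem small)); apply/andP.
have k_attained : exists B, [&& B \subset A :\ a, antichain B & #|B| == k].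
  have small0 : 0 < #|small|.
    apply/card_gt0P; exists set0; rewrite inE sub0set.
    by apply/antichainP => x y; rewrite inE.
  have [B] := eq_bigmax_cond (fun B : {set T} => #|B|) small0.
  by rewrite inE => /andP[BA' B_ac] k_eq; exists B; rewrite BA' B_ac /k k_eq eqxx.
have [|f f_cover] := IH (A :\ a) _ k A'_width.
  by move: A_lt; rewrite (cardsD1 a A) aA; lia.
apply: (dilworth_step aA a_max A_width A'_width f_cover k_attained).
by move=> A2 w2 lt2; apply: IH; lia.
Qed.

End StrictOrder.

(** * Insertion sort *)

Definition is_gt (ans : answer) := if ans is Ans_gt then true else false.
Definition is_lt (ans : answer) := if ans is Ans_lt then true else false.

Definition rel_of n (r : relT n) : rel 'I_n := fun x y => r (x, y).

Section Posets.
Variable n : nat.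
Implicit Types (r : relT n) (S : {set relT n}).

Lemma poset_irr r : posetb r -> irreflexive (rel_of r).
Proof. by case/andP=> /forallP irr _ x; apply/negbTE/irr. Qed.

Lemma poset_trans r : posetb r -> transitive (rel_of r).
Proof.
case/andP=> _ /forallP tr y x z Rxy Ryz.
by move: (tr x) => /forallP /(_ y) /forallP /(_ z) /implyP; apply; apply/andP.
Qed.

Lemma posets_wP r w : r \in posets_w n w -> posetb r /\ width_le r w.
Proof. by rewrite inE => /andP. Qed.

Lemma oracle_gt r x y : is_gt (oracle r x y) = r (x, y).
Proof. by rewrite /oracle; case: (r (x, y)) => //; case: (r (y, x)). Qed.

Lemma oracle_lt r x y : posetb r -> is_lt (oracle r x y) = r (y, x).
Proof.
move=> r_poset; rewrite /oracle; case Rxy: (r (x, y)); case Ryx: (r (y, x)) => //.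
by have := poset_trans r_poset Rxy Ryx; rewrite [rel_of _ _ _]poset_irr.
Qed.

Lemma width_le_antichain_bound r w A : width_le r w -> antichain_bound (rel_of r) A w.
Proof.
move=> /forallP r_width B _ /antichainP B_ac; apply: (implyP (r_width B)).
apply/forall_inP => a aB; apply/forall_inP => b bB; apply/implyP => ne_ab.
by rewrite /incompb (B_ac a b aB bB ne_ab) (B_ac b a bB aB _) // eq_sym.
Qed.

Lemma poset_chain_cover r w A :
  r \in posets_w n w -> exists f, chain_cover (rel_of r) A w f.
Proof.
case/posets_wP=> r_poset r_width.
exact/(dilworth (poset_irr r_poset) (poset_trans r_poset))/width_le_antichain_bound.
Qed.

End Posets.

(* [rho r] is either [rel_of r] or its converse, so that the same search
   locates both the part of [C] below [x] and the part above it. *)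
Section LocateInChain.
Variables (n : nat) (S : {set relT n}) (rho : relT n -> rel 'I_n) (ask : answer -> bool).
Variables (x : 'I_n) (C : {set 'I_n}) (B : R).
Hypothesis rho_irr : forall r, r \in S -> irreflexive (rho r).
Hypothesis rho_trans : forall r, r \in S -> transitive (rho r).
Hypothesis C_chain : forall r, r \in S -> chain (rho r) C.
Hypothesis C_agree : forall r r', r \in S -> r' \in S -> {in C &, rho r =2 rho r'}.
Hypothesis ask_oracle : forall r z, r \in S -> ask (oracle r x z) = rho r x z.

Let below_x r := #|[set z in C | rho r x z]|.

Lemma rho_x_rank r0 r z : r0 \in S -> r \in S -> z \in C ->
  rho r x z = (rank (rho r0) C z < below_x r).
Proof.
move=> r0S rS zC; rewrite (chain_belowE (rho_irr rS) (rho_trans rS) _ (C_chain rS) zC).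
congr (_ < _); apply: eq_card => u; rewrite !inE.
by case uC: (u \in C) => //=; rewrite (C_agree rS r0S).
Qed.

Lemma locate_in_chain :
  (forall S' : {set relT n}, S' \subset S ->
     {in S' &, forall r r', {in C, rho r x =1 rho r' x}} -> sortable S' B) ->
  sortable S (B + 2).
Proof.
move=> next; case: (set_0Vmem S) => [-> | [r0 r0S]]; first exact: sortable_set0.
pose q t := odflt x [pick z in C | rank (rho r0) C z == t.-1].
have q_rank t : 0 < t <= #|C| -> q t \in C /\ rank (rho r0) C (q t) = t.-1.
  case/andP=> t_gt0 t_le; rewrite /q; case: pickP => [z /andP[zC /eqP] // | none].
  have [z zC rz] : exists2 z, z \in C & rank (rho r0) C z = t.-1.
    by apply: (rank_onto (rho_irr r0S) (rho_trans r0S) (C_chain r0S)); rewrite prednK.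
  by have := none z; rewrite zC rz eqxx.
apply: (threshold_search (j := below_x) (M := #|C|) (qx := fun _ => x) (qy := q)
          (g := fun _ => ask)).
- by move=> r _; apply/subset_leq_card/subsetP => z; rewrite inE => /andP[].
- move=> t r t_range rS; have [qC q_r] := q_rank t t_range.
  by rewrite ask_oracle // (rho_x_rank r0S) // q_r; case/andP: t_range; lia.
- move=> v; apply: next => [| r r']; first by apply/subsetP => r; rewrite inE => /andP[].
  rewrite !inE => /andP[rS /eqP rv] /andP[r'S /eqP r'v] z zC.
  by rewrite !(rho_x_rank rS) // rv r'v.
Qed.

End LocateInChain.

Definition agree n (S : {set relT n}) k := forall r r', r \in S -> r' \in S ->
  forall a b : 'I_n, a < k -> b < k -> r (a, b) = r' (a, b).

Lemma agree_sub n (S S' : {set relT n}) k : S' \subset S -> agree S k -> agree S' k.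
Proof. by move=> /subsetP sub ag r r' /sub rS /sub r'S; apply: ag. Qed.

Section Insertion.
Variables (n w k : nat) (x : 'I_n) (f : 'I_n -> nat).
Hypothesis x_k : nat_of_ord x = k.
Hypothesis f_lt : forall a : 'I_n, a < k -> f a < w.
Implicit Types (r : relT n) (S : {set relT n}).

Let prefix := [set a : 'I_n | a < k].
Let C i := [set z : 'I_n | (z < k) && (f z == i)].

Let admissible S := [/\ S \subset posets_w n w, agree S k &
  forall r, r \in S -> chain_cover (rel_of r) prefix w f].

Let located S i := forall r r', r \in S -> r' \in S ->
  forall z : 'I_n, z < k -> f z < i ->
  r (x, z) = r' (x, z) /\ r (z, x) = r' (z, x).

Lemma admissible_sub S S' : S' \subset S -> admissible S -> admissible S'.
Proof.
move=> sub [S_posets S_agree S_cover]; split; first exact: subset_trans sub S_posets.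
  exact: agree_sub sub S_agree.
by move=> r /(subsetP sub); apply: S_cover.
Qed.

Lemma chain_C S i r : admissible S -> r \in S -> chain (rel_of r) (C i).
Proof.
case=> _ _ S_cover rS u v; rewrite !inE => /andP[uk /eqP fu] /andP[vk /eqP fv].
by apply: (S_cover r rS).2; rewrite ?inE // fu fv.
Qed.

Lemma agree_C S i r r' : admissible S -> r \in S -> r' \in S ->
  {in C i &, rel_of r =2 rel_of r'}.
Proof.
case=> _ S_agree _ rS r'S u v; rewrite !inE => /andP[uk _] /andP[vk _].
exact: S_agree.
Qed.

Lemma admissible_poset S r : admissible S -> r \in S -> posetb r.
Proof. by case=> /subsetP S_posets _ _ /S_posets /posets_wP[]. Qed.

Lemma locate_down S i B : admissible S ->
  (forall S' : {set relT n}, S' \subset S ->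
     {in S' &, forall r r', {in C i, forall z, r (x, z) = r' (x, z)}} -> sortable S' B) ->
  sortable S (B + 2).
Proof.
move=> S_adm; apply: (locate_in_chain (rho := @rel_of n) (ask := is_gt)).
- by move=> r /(admissible_poset S_adm)/poset_irr.
- by move=> r /(admissible_poset S_adm)/poset_trans.
- by move=> r; apply: chain_C.
- by move=> r r'; apply: agree_C.
- by move=> r z _; apply: oracle_gt.
Qed.

Lemma locate_up S i B : admissible S ->
  (forall S' : {set relT n}, S' \subset S ->
     {in S' &, forall r r', {in C i, forall z, r (z, x) = r' (z, x)}} -> sortable S' B) ->
  sortable S (B + 2).
Proof.
move=> S_adm; apply: (locate_in_chain (rho := fun r a b => r (b, a)) (ask := is_lt)).
- by move=> r /(admissible_poset S_adm)/poset_irr.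
- by move=> r /(admissible_poset S_adm)/poset_trans/rev_trans.
- by move=> r rS u v uC vC; case: (chain_C (i := i) S_adm rS uC vC) => [| []]; auto.
- by move=> r r' rS r'S u v uC vC; apply: (agree_C (i := i) S_adm rS r'S vC uC).
- by move=> r z rS; apply/oracle_lt/(admissible_poset S_adm).
Qed.

Lemma chain_step S i B : admissible S -> located S i ->
  (forall S' : {set relT n}, S' \subset S -> located S' i.+1 -> sortable S' B) ->
  sortable S (B + 4).
Proof.
move=> S_adm S_loc next; apply: (sortable_le (B1 := B + 2 + 2)); first lra.
apply: (locate_down (i := i) S_adm) => S1 S1_sub S1_down.
apply: (locate_up (i := i) (admissible_sub S1_sub S_adm)) => S2 S2_sub S2_up.
apply: next; first exact: subset_trans S2_sub S1_sub.
move=> r r' rS2 r'S2 z zk fz.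
have rS1 := subsetP S2_sub r rS2; have r'S1 := subsetP S2_sub r' r'S2.
case: (ltngtP (f z) i) => [lt_i | | eq_i]; last 1 first.
- have zC : z \in C i by rewrite inE zk eq_i eqxx.
  by split; [apply: S1_down | apply: S2_up].
- exact: S_loc (subsetP S1_sub _ rS1) (subsetP S1_sub _ r'S1) _ zk lt_i.
- lia.
Qed.

Lemma located_agree S : admissible S -> located S w -> agree S k.+1.
Proof.
move=> S_adm S_loc r r' rS r'S.
have prefix_or_x (c : 'I_n) : c < k.+1 -> c < k \/ c = x.
  rewrite ltnS leq_eqVlt => /orP[/eqP ec | ]; last by left.
  by right; apply: val_inj; rewrite /= ec x_k.
move=> a b /prefix_or_x[ak | ->] /prefix_or_x[bk | ->].
- by case: S_adm => _ S_agree _; apply: S_agree.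
- exact: (S_loc r r' rS r'S a ak (f_lt ak)).2.
- exact: (S_loc r r' rS r'S b bk (f_lt bk)).1.
- by have irr q := poset_irr (admissible_poset S_adm q) x; rewrite [LHS]irr ?[RHS]irr.
Qed.

Lemma insert_element S B : admissible S ->
  (forall S', S' \subset S -> agree S' k.+1 -> sortable S' B) ->
  sortable S (B + 4 * INR w).
Proof.
move=> S_adm next.
suff steps m : forall i S', i + m = w -> S' \subset S -> located S' i ->
    sortable S' (B + 4 * INR m).
  by apply: (steps w 0 S) => // r r' _ _ z _; rewrite ltn0.
elim: m => [|m IH] i S' im S'_sub S'_loc.
  apply: (sortable_le (B1 := B)); first by rewrite /= Rmult_0_r Rplus_0_r; apply: Rle_refl.
  apply: next S'_sub (located_agree (admissible_sub S'_sub S_adm) _).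
  by rewrite -im addn0.
apply: (sortable_le (B1 := B + 4 * INR m + 4)); first by rewrite S_INR; lra.
apply: chain_step (admissible_sub S'_sub S_adm) S'_loc _ => S'' S''_sub S''_loc.
by apply: IH S''_loc; [rewrite addSnnS | apply: subset_trans S''_sub S'_sub].
Qed.

End Insertion.

Lemma sortable_from_prefix n w m : forall k (S : {set relT n}), k + m = n ->
  S \subset posets_w n w -> agree S k -> sortable S (4 * INR w * INR m).
Proof.
elim: m => [|m IH] k S km S_posets S_agree;
  case: (set_0Vmem S) => [-> | [r0 r0S]]; try exact: sortable_set0.
  exists (Leaf (fun a b => r0 (a, b))) => r rS; split.
    by move=> a b; rewrite addn0 in km; apply: S_agree; rewrite ?km.
  by rewrite /= Rmult_0_r Rplus_0_r; apply: log2_ge0.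
have k_lt : k < n by lia.
pose prefix := [set a : 'I_n | a < k].
have [f [f_lt f_chain]] := poset_chain_cover prefix (subsetP S_posets r0 r0S).
apply: (sortable_le (B1 := 4 * INR w * INR m + 4 * INR w)); first by rewrite S_INR; lra.
apply: (@insert_element n w k (Ordinal k_lt) f) => //.
- by move=> a ak; apply: f_lt; rewrite inE.
- split=> // r rS; split=> // u v uP vP; have := f_chain u v uP vP.
  by move: uP vP; rewrite !inE /rel_of => uk vk; rewrite !(S_agree r0 r r0S rS).
- move=> S' S'_sub S'_agree; apply: IH S'_agree; first by rewrite addSnnS.
  exact: subset_trans S'_sub S_posets.
Qed.

Theorem sortable_posets n w : sortable (posets_w n w) (4 * INR w * INR n).
Proof. by apply: (@sortable_from_prefix n w n 0) => // r r' _ _ a b; rewrite ltn0. Qed.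

(** * Counting posets of bounded width *)

Section Encoding.
Variables n w : nat.
Implicit Types (r : relT n).

Definition covering r (F : {ffun 'I_n -> 'I_w.+1}) :=
  [forall a, F a < w] &&
  [forall a, forall b, (F a == F b) ==> [|| a == b, r (a, b) | r (b, a)]].

Section FixedCover.
Variable F : {ffun 'I_n -> 'I_w.+1}.

Definition chain_of (i : nat) := [set z | (F z : nat) == i].
Definition count_below r i y := #|[set z in chain_of i | r (y, z)]|.
Definition crank r y := count_below r (F y) y.

(* Along the chain of [y], [count_below r i y] is monotone in [y]. Such a
   monotone sequence is recovered from the places where it jumps ([jump]) and
   the set of values it takes ([hit r j z]: the element [z] of chain [i] is the
   largest one below some element of chain [j]). With the ranks [crank] inside
   the chains, these [2wn] bits determine [r]. *)
Definition jump r i y := (0 < count_below r i y) &&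
  [forall p, ((F p : nat) == F y) && r (y, p) ==> (count_below r i p < count_below r i y)].
Definition hit r i z :=
  [exists p, ((F p : nat) == i) && (count_below r (F z) p == (crank r z).+1)].
Definition bits r (b : 'I_w * 'I_n * bool) :=
  let: (i, y, is_hit) := b in
  ((F y : nat) != i) && (if is_hit then hit r i y else jump r i y).

Section OneRel.
Variable r : relT n.
Hypotheses (r_poset : posetb r) (r_cover : covering r F).

Lemma cover_lt a : F a < w.
Proof. by case/andP: r_cover => /forallP. Qed.

Lemma chain_of_chain i : chain (rel_of r) (chain_of i).
Proof.
move=> a b; rewrite !inE => /eqP Fa /eqP Fb.
case/andP: r_cover => _ /forallP /(_ a) /forallP /(_ b) /implyP cover.
have /cover /or3P[/eqP-> | Rab | Rba] : F a == F b by apply/eqP/val_inj; rewrite /= Fa Fb.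
- by left.
- by right; left.
- by right; right.
Qed.

Lemma rel_count_belowE y z : r (y, z) = (crank r z < count_below r (F z) y).
Proof.
have zC : z \in chain_of (F z) by rewrite inE.
rewrite -[r (y, z)]/(rel_of r y z).
have F_chain := chain_of_chain (i := F z).
rewrite (chain_belowE (poset_irr r_poset) (poset_trans r_poset) y F_chain zC).
by congr (_ < _); apply: eq_card => u; rewrite !inE.
Qed.

Lemma same_chainE a b : (F a : nat) = F b -> r (a, b) = (crank r b < crank r a).
Proof. by move=> Fab; rewrite rel_count_belowE /crank -Fab. Qed.

Lemma count_below_mono i y p : r (y, p) -> count_below r i p <= count_below r i y.
Proof.
move=> Ryp; apply/subset_leq_card/subsetP => z; rewrite !inE.
by case/andP=> -> /(poset_trans r_poset Ryp).
Qed.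

Lemma count_below_le_card i y : count_below r i y <= #|chain_of i|.
Proof. by apply/subset_leq_card/subsetP => z; rewrite inE => /andP[]. Qed.

End OneRel.

Section TwoRel.
Variables r1 r2 : relT n.
Hypotheses (r1_poset : posetb r1) (r2_poset : posetb r2).
Hypotheses (r1_cover : covering r1 F) (r2_cover : covering r2 F).
Hypothesis same_crank : forall a, crank r1 a = crank r2 a.
Hypothesis same_bits : forall b, bits r1 b = bits r2 b.

Lemma same_chain_rel a b : (F a : nat) = F b -> r1 (a, b) = r2 (a, b).
Proof. by move=> Fab; rewrite !same_chainE // !same_crank. Qed.

Lemma count_below_jump i y : i < w -> (F y : nat) != i -> jump r1 i y ->
  (forall p, (F p : nat) = F y -> r1 (y, p) -> count_below r1 i p = count_below r2 i p) ->
  count_below r1 i y <= count_below r2 i y.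
Proof.
move=> i_lt Fy_i jump1 IH.
have /andP[beta_gt0 /forall_inP jump2] : jump r2 i y.
  by have := same_bits (Ordinal i_lt, y, false); rewrite /= Fy_i jump1.
rewrite leqNgt; apply/negP => lt_beta.
have [z zC rank_z] :
    exists2 z, z \in chain_of i & rank (rel_of r2) (chain_of i) z = (count_below r2 i y).-1.
  have i_chain := chain_of_chain (i := i) r2_cover.
  apply: (rank_onto (poset_irr r2_poset) (poset_trans r2_poset) i_chain).
  by rewrite prednK // count_below_le_card.
have Fz : (F z : nat) = i by move: zC; rewrite inE => /eqP.
have crank_z : crank r2 z = (count_below r2 i y).-1.
  by rewrite -rank_z /crank /count_below Fz; apply: eq_card => u; rewrite !inE.
have := same_bits (Ordinal (cover_lt r1_cover y), z, true).
have -> /= : bits r2 (Ordinal (cover_lt r1_cover y), z, true).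
  rewrite /= Fz eq_sym Fy_i; apply/existsP; exists y; rewrite eqxx /= Fz crank_z.
  by rewrite prednK.
rewrite Fz eq_sym Fy_i => /existsP[p /andP[/eqP Fp /eqP count_p]].
rewrite Fz same_crank crank_z prednK // in count_p.
have yC : y \in chain_of (F y) by rewrite inE.
have pC : p \in chain_of (F y) by rewrite inE Fp.
case: (chain_of_chain r1_cover yC pC) => [eyp | [R1yp | R1py]].
- by rewrite -eyp in count_p; rewrite count_p ltnn in lt_beta.
- rewrite /rel_of in R1yp.
  have := jump2 p; rewrite Fp eqxx -same_chain_rel ?Fp // R1yp -IH // count_p ltnn.
  by move/(_ isT).
- by have := count_below_mono r1_poset i R1py; rewrite count_p leqNgt lt_beta.
Qed.

Lemma count_below_step i y : i < w -> (F y : nat) != i ->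
  (forall p, (F p : nat) = F y -> r1 (y, p) -> count_below r1 i p = count_below r2 i p) ->
  count_below r1 i y <= count_below r2 i y.
Proof.
move=> i_lt Fy_i IH; case jump1: (jump r1 i y); first exact: count_below_jump.
move/negbT: jump1; rewrite negb_and -leqNgt leqn0 => /orP[/eqP-> // | ].
rewrite negb_forall => /existsP[p]; rewrite negb_imply -leqNgt.
case/andP=> /andP[/eqP Fp R1yp] le_p; apply: leq_trans le_p _; rewrite IH //.
by apply: (count_below_mono r2_poset); rewrite -same_chain_rel ?Fp.
Qed.

End TwoRel.

Lemma same_code_eq r1 r2 : posetb r1 -> posetb r2 -> covering r1 F -> covering r2 F ->
  (forall a, crank r1 a = crank r2 a) -> (forall b, bits r1 b = bits r2 b) -> r1 = r2.
Proof.
move=> r1_poset r2_poset r1_cover r2_cover same_crank same_bits.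
apply/ffunP => -[y z]; rewrite !rel_count_belowE // same_crank; congr (_ < _).
have i_lt := cover_lt r1_cover z; move: (F z : nat) i_lt => i i_lt.
suff count_eq N x : crank r1 x < N -> count_below r1 i x = count_below r2 i x.
  exact: count_eq.
elim: N x => [// | N IH] x x_lt.
case: (eqVneq (F x : nat) i) => [<- | Fx_i]; first exact: same_crank.
have sym_crank a : crank r2 a = crank r1 a by rewrite same_crank.
have sym_bits b : bits r2 b = bits r1 b by rewrite same_bits.
apply/eqP; rewrite eqn_leq; apply/andP; split.
  apply: (count_below_step r1_poset r2_poset) => // p Fp R1xp; apply: IH.
  by move: R1xp; rewrite same_chainE // => /leq_trans; apply.
apply: (count_below_step r2_poset r1_poset) => // p Fp R2xp; symmetry; apply: IH.
by move: R2xp; rewrite same_chainE // -!same_crank => /leq_trans; apply.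
Qed.

End FixedCover.

Definition cover_of r : {ffun 'I_n -> 'I_w.+1} :=
  odflt [ffun _ => ord0] [pick F | covering r F].

Definition code r :=
  (cover_of r, [ffun a => inord (crank (cover_of r) r a) : 'I_n.+1],
   [ffun b => bits (cover_of r) r b]).

Lemma cover_ofP r : r \in posets_w n w -> covering r (cover_of r).
Proof.
move=> r_posets; rewrite /cover_of; case: pickP => [F // | none].
have [f [f_lt f_chain]] := poset_chain_cover [set: 'I_n] r_posets.
pose F := [ffun a => inord (f a) : 'I_w.+1].
have FE a : F a = f a :> nat by rewrite ffunE inordK // ltnS ltnW // f_lt.
case/negP: (none F); apply/andP; split; first by apply/forallP => a; rewrite FE f_lt.
apply/forallP => a; apply/forallP => b; apply/implyP => /eqP /(congr1 val) /=.
rewrite !FE => /f_chain; rewrite !in_setT => /(_ isT isT) [-> | [Rab | Rba]].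
- by rewrite eqxx.
- by rewrite [r (a, b)]Rab orbT.
- by rewrite [r (b, a)]Rba !orbT.
Qed.

Lemma code_inj : {in posets_w n w &, injective code}.
Proof.
move=> r1 r2 r1_posets r2_posets [same_cover same_crank same_bits].
have [r1_poset _] := posets_wP r1_posets; have [r2_poset _] := posets_wP r2_posets.
have r2_cover := cover_ofP r2_posets; rewrite -same_cover in r2_cover.
apply: (same_code_eq r1_poset r2_poset (cover_ofP r1_posets) r2_cover).
- move=> a; move/ffunP/(_ a): same_crank; rewrite !ffunE -same_cover => /(congr1 val).
  have crank_lt r : crank (cover_of r1) r a < n.+1.
    by rewrite ltnS; apply: leq_trans (max_card _) _; rewrite card_ord.
  by rewrite /= !inordK.
- by move=> b; move/ffunP/(_ b): same_bits; rewrite !ffunE -same_cover.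
Qed.

Lemma card_posets_w : N_w w n <= w.+1 ^ n * n.+1 ^ n * 2 ^ (w * n * 2).
Proof.
rewrite /N_w -(card_in_imset code_inj); apply: leq_trans (max_card _) _.
by rewrite !card_prod !card_ffun !card_prod !card_ord card_bool.
Qed.

End Encoding.

Lemma N_w_le n w : 0 < n -> 0 < w -> N_w w n <= n ^ n * 2 ^ (4 * w * n).
Proof.
move=> n_gt0 w_gt0; apply: leq_trans (card_posets_w n w) _.
have le_w : w.+1 ^ n <= 2 ^ (w * n) by rewrite expnM leq_exp2r // ltn_expl.
have le_n : n.+1 ^ n <= 2 ^ (w * n) * n ^ n.
  apply: (@leq_trans ((2 * n) ^ n)); first by rewrite leq_exp2r //; lia.
  by rewrite expnMn leq_mul2r leq_pexp2l ?leq_pmull ?orbT.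
apply: leq_trans (leq_mul (leq_mul le_w le_n) (leqnn (2 ^ (w * n * 2)))) _.
rewrite (_ : 4 * w * n = w * n + w * n + w * n * 2) ?expnD; last by lia.
set X := 2 ^ (w * n); set Y := 2 ^ (w * n * 2); set Z := n ^ n.
by rewrite mulnCA !mulnA.
Qed.

Lemma log2_N_w_le n w : 0 < n -> 0 < w ->
  (log2 (INR (N_w w n)) <= INR n * log2 (INR n) + 4 * INR w * INR n)%R.
Proof.
move=> n_gt0 w_gt0; have nlogn_ge0 := xlog2x_ge0 n.
have wn_ge0 : (0 <= INR w * INR n)%R by apply: Rmult_le_pos; apply: pos_INR.
case N0: (N_w w n) => [|N]; first by rewrite log2_0; lra.
rewrite -N0; apply: Rle_trans (log2_leq _ (N_w_le n_gt0 w_gt0)) _; first by rewrite N0.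
rewrite log2M ?expn_gt0 ?n_gt0 // log2X // log2_exp2 !mult_INR.
by rewrite (_ : INR 4 = 4%R); [lra | rewrite /=; lra].
Qed.

Unset Implicit Arguments.

Theorem theorem4 (n w : nat) (hn : 1 <= n) (hw : 1 <= w) :
  exists T : dtree n,
    forall r : relT n, r \in posets_w n w ->
      (forall x y : 'I_n, (run r T).1 x y = r (x, y)) /\
      (INR (run r T).2 <= 2 * log2 (INR (N_w w n)) + 4 * INR w * INR n)%R /\
      (INR (run r T).2 <= 2 * INR n * log2 (INR n) + 8 * INR w * INR n
                          + 2 * INR w * log2 (INR w))%R.
Proof.
have [T T_sorts] := sortable_posets n w; exists T => r r_posets.
have [sorts_r cost] := T_sorts r r_posets; split=> //.
have := log2_N_w_le hn hw; have := log2_ge0 (N_w w n).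
have := xlog2x_ge0 n; have := xlog2x_ge0 w.
have : (0 <= INR w * INR n)%R by apply: Rmult_le_pos; apply: pos_INR.
move: cost; rewrite -/(N_w w n); lra.
Qed.
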